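(* Let $n$ and $t$ be positive integers with $t\le n$, and let $G_{n,t}$ be the subgroup of the group $(\mathcal{P}[n],\triangle)$ generated by the sets $g_1,g_2,\ldots,g_t\subseteq[n]$ constructed below. Then (i) $|G_{n,t}|=2^t$; and (ii) every non-zero (i.e. non-empty) element of $G_{n,t}$ intersects every cyclic translate modulo $n$ of $[t]$, that is, every set of the form $\{s+1,s+2,\ldots,s+t\}$ with $s\in\mathbb{Z}$, where each element is replaced by its representative in $[n]=\{1,\ldots,n\}$ modulo $n$.
   Context: $\mathcal{P}[n]$ denotes the power set of $[n]=\{1,2,\ldots,n\}$, which is an abelian group under symmetric difference $A\triangle B=(A\setminus B)\cup(B\setminus A)$, with identity (zero) the empty set. For integers $y$ and $z>0$, $[y]_z$ denotes the least strictly positive residue of $y$ modulo $z$ (so $[y]_z\in\{1,\ldots,z\}$). Construction. Apply Euclid's algorithm to $n$ and $t$: set $r_{-1}=n$, $r_0=t$, and for $i\ge1$ write $r_{i-2}=q_ir_{i-1}+r_i$ with $0\le r_i<r_{i-1}$, stopping at the first index $k\ge1$ with $r_k=0$. Thus $n=q_1t+r_1$, $t=q_2r_1+r_2$, $r_1=q_3r_2+r_3$, $\ldots$, $r_{k-2}=q_kr_{k-1}$, with $t>r_1>\cdots>r_{k-1}>0$. Define partial sums $n_m=q_1t+q_3r_2+\cdots+q_{2m-1}r_{2m-2}$ (for $m\ge0$ with $2m-1\le k$) and $t_m=q_2r_1+q_4r_3+\cdots+q_{2m}r_{2m-1}$ (for $m\ge0$ with $2m\le k$), with $n_0=t_0=0$.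 (Then $n=n_m+r_{2m-1}$ and $t=t_m+r_{2m}$.) Fix $i$ with $1\le i\le t$, and let $a$ be maximal (among indices for which $t_a$ is defined) with $t_a<i$. For $0\le j\le a$ set $g_i^{(j)}=\{x\in(n_j,n_{j+1}]\cap\mathbb{Z}: x-n_j\equiv i-t_j \pmod{r_{2j}}\}$, and set $g_i^{(a+1)}=\{n_{a+1}+[i-t_a]_{r_{2a+1}}\}$ if $k\ne 2a+1$, and $g_i^{(a+1)}=\emptyset$ if $k=2a+1$. Finally let $g_i=\bigcup_{j=0}^{a+1}g_i^{(j)}\subseteq[n]$. *)

From mathcomp Require Import all_boot all_order all_algebra.
Set Implicit Arguments. Unset Strict Implicit. Unset Printing Implicit Defensive.
Import Order.TTheory GRing.Theory Num.Theory.

(* P[n] is represented by {set 'I_n}: the ordinal x : 'I_n stands for the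
   integer x+1 of [n] = {1,...,n}. *)

Definition symdiff (T : finType) (A B : {set T}) : {set T} :=
  (A :\: B) :|: (B :\: A).

(* H is a subgroup of ({set T}, symdiff): contains the zero (empty set) and
   is closed under the group law (every element is its own inverse). *)
Definition is_subgroup (T : finType) (H : {set {set T}}) : bool :=
  (set0 \in H) && [forall A in H, forall B in H, symdiff A B \in H].

Definition generated (T : finType) (S : {set {set T}}) : {set {set T}} :=
  \bigcap_(H | is_subgroup H && (S \subset H)) H.

Definition lpr (y z : int) : int := (((y - 1) %% z)%Z + 1)%R.

(* rp n t i = (r_{i-1}, r_i), with r_{-1} = n, r_0 = t, r_i = r_{i-2} mod r_{i-1}. *)
Fixpoint rp (n t : nat) (i : nat) : nat * nat :=
  match i with
  | 0 => (n, t)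
  | i'.+1 => let: (x, y) := rp n t i' in (y, x %% y)
  end.

Definition r (n t i : nat) : nat := (rp n t i).2.

(* q n t i = q_i = r_{i-2} div r_{i-1}  (i >= 1) *)
Definition q (n t i : nat) : nat := (rp n t i.-1).1 %/ (rp n t i.-1).2.

(* k = the first index >= 1 with r_k = 0 (for t >= 1; r_0 = t > 0 and the
   remainders strictly decrease, so such k exists and k <= t < (n+t).+1). *)
Definition kE (n t : nat) : nat := find (fun i => r n t i == 0) (iota 0 (n + t).+1).

Definition nm (n t m : nat) : nat := \sum_(j < m) q n t (2 * j).+1 * r n t (2 * j).
Definition tm (n t m : nat) : nat := \sum_(j < m) q n t (2 * j).+2 * r n t (2 * j).+1.

(* a = maximal index (with t_a defined, i.e. 2a <= k) such that t_a < i *)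
Definition aE (n t i : nat) : nat :=
  \max_(a < (kE n t)./2.+1 | tm n t a < i) (a : nat).

Definition g_mem (n t i x : nat) : bool :=
  let a := aE n t i in
  [exists j : 'I_a.+1,
     (nm n t j < x <= nm n t j.+1) &&
     ((Posz x - Posz (nm n t j))%R == (Posz i - Posz (tm n t j))%R %[mod Posz (r n t (2 * j))])%Z]
  || ((kE n t != (2 * a).+1) &&
      (Posz x == (Posz (nm n t a.+1) + lpr (Posz i - Posz (tm n t a)) (Posz (r n t (2 * a).+1)))%R)).

Definition g (n t i : nat) : {set 'I_n} := [set x : 'I_n | g_mem n t i x.+1].

Definition G (n t : nat) : {set {set 'I_n}} :=
  generated [set g n t (val i).+1 | i : 'I_t].

Definition window (n t : nat) (s : int) : {set 'I_n} :=
  [set x : 'I_n | [exists j : 'I_t, Posz (x.+1) == lpr (s + Posz (val j).+1)%R (Posz n)]].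

From mathcomp Require Import all_boot all_order all_algebra.
From mathcomp Require Import zify.
Set Implicit Arguments. Unset Strict Implicit. Unset Printing Implicit Defensive.
Import Order.TTheory GRing.Theory Num.Theory.

(* Write N = (n %/ t) * t and r = n %% t.  On [1, N] the sets g_1, ..., g_t are the
   residue classes modulo t, while on the top part (N, n] the relation "x in g_i" is
   the transpose of the one for the pair (t, r).  By strong induction on t, for every
   cyclic window W of t positions the t x t matrix [x in g_i] (i in [1, t], x in W) is
   invertible over GF(2): after permuting rows and columns it is block triangular,
   its blocks being permutation matrices from the periodic part and a transposed
   window (or tail) matrix for (t, r).  Invertibility of one such matrix makes the g_i
   independent, so |G| = 2^t; invertibility of all of them says that every nonzero
   combination of the g_i meets every window. *)

Lemma rpS n t j : rp n t j.+1 = ((rp n t j).2, (rp n t j).1 %% (rp n t j).2).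
Proof. by rewrite /=; case: (rp n t j). Qed.

Lemma rp_shift n t j : rp n t j.+1 = rp t (n %% t) j.
Proof. by elim: j => [|j IH] //; rewrite rpS IH -rpS. Qed.

Lemma r_shift n t j : r n t j.+1 = r t (n %% t) j.
Proof. by rewrite /r rp_shift. Qed.

Lemma q_shift n t j : q n t j.+2 = q t (n %% t) j.+1.
Proof. by rewrite /q (_ : j.+2.-1 = j.+1) // rp_shift. Qed.

Lemma nm0 n t : nm n t 0 = 0. Proof. by rewrite /nm big_ord0. Qed.
Lemma tm0 n t : tm n t 0 = 0. Proof. by rewrite /tm big_ord0. Qed.

Lemma nmS n t m : nm n t m.+1 = nm n t m + q n t (2 * m).+1 * r n t (2 * m).
Proof. by rewrite /nm big_ord_recr. Qed.

Lemma tmS n t m : tm n t m.+1 = tm n t m + q n t (2 * m).+2 * r n t (2 * m).+1.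
Proof. by rewrite /tm big_ord_recr. Qed.

Lemma tm_shift n t m : tm n t m = nm t (n %% t) m.
Proof. by apply: eq_bigr => j _; rewrite -q_shift -r_shift. Qed.

Lemma nm_shift n t m : nm n t m.+1 = n %/ t * t + tm t (n %% t) m.
Proof.
rewrite /nm /tm big_ord_recl muln0; congr (_ + _).
apply: eq_bigr => j _.
have -> : 2 * bump 0 j = (2 * j).+2 by rewrite /bump /=; lia.
by rewrite q_shift r_shift.
Qed.

Lemma nm1 n t : nm n t 1 = n %/ t * t.
Proof. by rewrite nm_shift tm0 addn0. Qed.

Lemma leq_nm n t m m' : m <= m' -> nm n t m <= nm n t m'.
Proof.
move=> /subnK <-; elim: (m' - m) => [|d IH] //.
by rewrite addSn nmS (leq_trans IH) // leq_addr.
Qed.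

Lemma leq_tm n t m m' : m <= m' -> tm n t m <= tm n t m'.
Proof. by rewrite !tm_shift; apply: leq_nm. Qed.

Definition rprev n t j := (rp n t j).1.

Lemma rprevS n t j : rprev n t j.+1 = r n t j.
Proof. by rewrite /rprev rpS. Qed.

Lemma rS n t j : r n t j.+1 = rprev n t j %% r n t j.
Proof. by rewrite /r /rprev rpS. Qed.

Lemma rprevE n t j : rprev n t j = q n t j.+1 * r n t j + r n t j.+1.
Proof. by rewrite rS -divn_eq. Qed.

Lemma n_nm_rprev n t m : n = nm n t m + rprev n t (2 * m).
Proof.
elim: m => [|m IH]; first by rewrite nm0.
by rewrite nmS mulnS -[2 + _]/(2 * m).+2 rprevS {1}IH rprevE; lia.
Qed.

Lemma t_tm_r n t m : t = tm n t m + r n t (2 * m).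
Proof.
elim: m => [|m IH]; first by rewrite tm0.
by rewrite tmS mulnS -[2 + _]/(2 * m).+2 {1}IH -rprevS rprevE; lia.
Qed.

Lemma exists_r_eq0 n t : exists2 j, j <= t & r n t j = 0.
Proof.
suff decr j : (exists2 j', j' <= j & r n t j' = 0) \/ r n t j + j <= t.
  by case: (decr t) => [[j' ? ?]|?]; [exists j'; lia | exists t; lia].
elim: j => [|j [[j' ? ?]|IH]]; first by right; rewrite addn0.
- by left; exists j' => //; lia.
- have [rj0|rj_gt0] := posnP (r n t j); first by left; exists j.
  by right; rewrite rS; have := ltn_pmod (rprev n t j) rj_gt0; lia.
Qed.

Section EuclidLength.
Variables n t : nat.
Hypothesis t_gt0 : 0 < t.

Lemma kE_spec : [/\ 0 < kE n t, r n t (kE n t) = 0 &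
   forall j, j < kE n t -> 0 < r n t j].
Proof.
have [j j_le rj0] := exists_r_eq0 n t.
have has_r0 : has (fun i => r n t i == 0) (iota 0 (n + t).+1).
  by apply/hasP; exists j; [rewrite mem_iota; lia | apply/eqP].
have kE_lt : kE n t < (n + t).+1 by move: has_r0; rewrite has_find size_iota.
have := nth_find 0 has_r0; rewrite -/(kE n t) nth_iota // add0n => /eqP rk0.
split=> // [|j' j'_lt].
- by move: rk0; case: (kE n t) => // rt0; rewrite /r /= in rt0; lia.
- have := before_find 0 j'_lt; rewrite nth_iota; last by lia.
  by rewrite add0n lt0n => /negbT.
Qed.

Lemma q_after_kE j : kE n t <= j -> q n t j.+1 = 0.
Proof.
move=> j_ge; suff : (rp n t j).1 * (rp n t j).2 = 0.
  by rewrite /q /=; case: (rp n t j) => x y /= /eqP; rewrite muln_eq0;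
    case/orP=> /eqP ->; rewrite ?div0n ?divn0.
move: j_ge => /subnK <-; elim: (j - kE n t) => [|d IH].
  by case: kE_spec => _ rk0 _; rewrite add0n -/(r n t _) rk0 muln0.
rewrite addSn rpS /=.
move: IH; case: (rp n t (d + kE n t)) => x y /= /eqP; rewrite muln_eq0.
by case/orP=> /eqP ->; rewrite ?mod0n ?muln0 ?mul0n.
Qed.

End EuclidLength.

Lemma aE_spec n t i : 0 < i ->
  [/\ aE n t i <= (kE n t)./2, tm n t (aE n t i) < i &
     forall a, a <= (kE n t)./2 -> tm n t a < i -> a <= aE n t i].
Proof.
move=> i_gt0; set P := fun a : 'I_(kE n t)./2.+1 => tm n t a < i.
have P_gt0 : 0 < #|P| by apply/card_gt0P; exists ord0; rewrite /in_mem /= /P tm0.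
have [a0 Pa0 maxE] := eq_bigmax_cond (fun a : 'I_(kE n t)./2.+1 => (a : nat)) P_gt0.
have -> : aE n t i = a0 by rewrite /aE maxE.
split=> [|//|a a_le tma_lt]; first by rewrite -ltnS.
have := @leq_bigmax_cond _ P (fun a : 'I_(kE n t)./2.+1 => (a : nat))
  (Ordinal (_ : a < (kE n t)./2.+1)) tma_lt.
by rewrite maxE; apply.
Qed.

(* Membership of x in g_i, written so that x and i play symmetric roles: either x
   lies in a block (n_j, n_(j+1)] and x - n_j = i - t_j mod r_(2j), or i lies in a
   block (t_b, t_(b+1)] and i - t_b = x - n_(b+1) mod r_(2b+1).  One step of Euclid's
   algorithm exchanges the two alternatives, see [g_rel_shift]. *)
Definition g_rel n t i x : Prop :=
 (exists j, [/\ nm n t j < x <= nm n t j.+1, tm n t j < i &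
    ((Posz x - Posz (nm n t j))%R == (Posz i - Posz (tm n t j))%R
       %[mod Posz (r n t (2 * j))])%Z])
 \/ (exists b, [/\ tm n t b < i <= tm n t b.+1, nm n t b.+1 < x &
    ((Posz i - Posz (tm n t b))%R == (Posz x - Posz (nm n t b.+1))%R
       %[mod Posz (r n t (2 * b).+1)])%Z]).

Lemma g_rel_shift n t i x : nm n t 1 < x ->
  g_rel n t i x <-> g_rel t (n %% t) (x - nm n t 1) i.
Proof.
move: (nm_shift n t); rewrite nm1; move: (n %/ t * t) => N nmE x_gt.
have nm1E : nm n t 1 = N by rewrite nmE tm0 addn0.
have r2E b : r n t (2 * b.+1) = r t (n %% t) (2 * b).+1.
  by rewrite mulnS -[2 + _]/(2 * b).+2 r_shift.
split.
- case=> [[[|b] [/andP [lo hi] lt eqm]] | [b [/andP [lo hi] lt eqm]]].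
  + by rewrite nm1E in hi; lia.
  + right; exists b; move: lo hi lt eqm; rewrite !nmE !tm_shift r2E.
    by move=> ? ? ? {}eqm; split; [lia | lia | move: eqm; congr (_ == _ %[mod _])%Z; lia].
  + left; exists b; move: lo hi lt eqm; rewrite !nmE !tm_shift r_shift.
    by move=> ? ? ? {}eqm; split; [lia | lia | move: eqm; congr (_ == _ %[mod _])%Z; lia].
- case=> [[b [/andP [lo hi] lt eqm]] | [b [/andP [lo hi] lt eqm]]].
  + right; exists b; move: lo hi lt eqm; rewrite !nmE !tm_shift r_shift.
    by move=> ? ? ? {}eqm; split; [lia | lia | move: eqm; congr (_ == _ %[mod _])%Z; lia].
  + left; exists b.+1; move: lo hi lt eqm; rewrite !nmE !tm_shift r2E.
    by move=> ? ? ? {}eqm; split; [lia | lia | move: eqm; congr (_ == _ %[mod _])%Z; lia].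
Qed.

Lemma g_rel_low n t i x : 0 < x <= nm n t 1 -> 0 < i ->
  g_rel n t i x <-> (x == i %[mod t]).
Proof.
move=> /andP [x_gt0 x_le] i_gt0.
have nm1_le b : nm n t 1 <= nm n t b.+1 by apply: leq_nm.
split.
- case=> [[[|j] [/andP [lo hi] _ eqm]] | [b [_ lo _]]].
  + by move: eqm; rewrite nm0 tm0 !subr0 !modz_nat eqz_nat.
  + by have := nm1_le j; lia.
  + by have := nm1_le b; lia.
- move=> eqm; left; exists 0; rewrite nm0 tm0 !subr0 !modz_nat eqz_nat.
  by split; rewrite ?x_gt0.
Qed.

Lemma lprE w z : 0 < w -> lpr (Posz w) (Posz z) = Posz ((w - 1) %% z).+1.
Proof.
by move=> w_gt0; rewrite /lpr (_ : (Posz w - 1 = Posz (w - 1))%R) ?modz_nat; lia.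
Qed.

Lemma eqz_mod_subn a b c d m : b <= a -> d <= c ->
  ((Posz a - Posz b)%R == (Posz c - Posz d)%R %[mod Posz m])%Z = (a - b == c - d %[mod m]).
Proof.
move=> ba dc; rewrite (_ : (Posz a - Posz b)%R = Posz (a - b)); last by lia.
by rewrite (_ : (Posz c - Posz d)%R = Posz (c - d)) ?modz_nat ?eqz_nat //; lia.
Qed.

Section GMembership.
Variables n t i x : nat.
Hypotheses (i_gt0 : 0 < i) (i_le : i <= t) (x_gt0 : 0 < x) (x_le : x <= n).

Let t_gt0 : 0 < t. Proof. exact: leq_trans i_le. Qed.

Lemma g_mem_rel : g_mem n t i x -> g_rel n t i x.
Proof.
have [k_gt0 rk0 r_gt0] := kE_spec n t_gt0.
have [a_le tma_lt a_max] := aE_spec n t i_gt0.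
rewrite /g_mem; set k := kE n t in k_gt0 rk0 r_gt0 a_le a_max *.
set a := aE n t i in a_le tma_lt a_max *; case/orP.
  case/existsP=> j /andP [x_in eqm]; left; exists j; split => //.
  by apply: leq_ltn_trans tma_lt; apply: leq_tm; have := ltn_ord j; lia.
case/andP=> k_neq /eqP xE; right; exists a.
have a2_lt : (2 * a).+1 < k.
  have : 2 * a != k by apply/eqP=> e; have := t_tm_r n t a; rewrite e rk0; lia.
  by move: k_neq a_le; lia.
have rz_gt0 := r_gt0 _ a2_lt.
rewrite (_ : (Posz i - Posz (tm n t a))%R = Posz (i - tm n t a)) ?lprE in xE; try lia.
have {}xE : x = nm n t a.+1 + ((i - tm n t a - 1) %% r n t (2 * a).+1).+1 by lia.
split; [ | lia | ].
- apply/andP; split=> //; case: (leqP i (tm n t a.+1)) => // lt_i.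
  by have := a_max a.+1 _ lt_i; lia.
- rewrite eqz_mod_subn; [| lia | lia].
  rewrite xE (_ : _ - nm n t a.+1 = ((i - tm n t a - 1) %% r n t (2 * a).+1).+1); last by lia.
  by apply/eqP; rewrite -[(_ %% _).+1]addn1 modnDml; congr (_ %% _); lia.
Qed.

Lemma g_rel_mem : g_rel n t i x -> g_mem n t i x.
Proof.
have [k_gt0 rk0 r_gt0] := kE_spec n t_gt0.
have [a_le tma_lt a_max] := aE_spec n t i_gt0.
rewrite /g_mem; set k := kE n t in k_gt0 rk0 r_gt0 a_le a_max *.
set a := aE n t i in a_le tma_lt a_max *.
case=> [[j [/andP [lo hi] tmj eqm]] | [b [/andP [lo hi] nmb eqm]]].
  apply/orP; left; apply/existsP.
  have j_lt : j < a.+1.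
    case: (leqP j k./2) => j_le; first by have := a_max j j_le tmj; lia.
    by move: hi; rewrite nmS q_after_kE ?mul0n ?addn0; lia.
  by exists (Ordinal j_lt); rewrite /= lo hi eqm.
have b2_lt : (2 * b).+1 < k.
  case: (leqP (2 * b).+2 k) => // lt_k.
  by move: lo hi; rewrite tmS q_after_kE ?mul0n ?addn0; lia.
have ba : b = a.
  have := a_max b ltac:(lia) lo; rewrite leq_eqVlt => /orP [/eqP //|lt_ba].
  by have := leq_tm n t lt_ba; lia.
subst b; apply/orP; right; apply/andP; split; first by apply/eqP; lia.
have rz_gt0 := r_gt0 _ b2_lt.
rewrite (_ : (Posz i - Posz (tm n t a))%R = Posz (i - tm n t a)) ?lprE; try lia.
move: eqm; rewrite eqz_mod_subn; [| lia | lia] => eqm.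
apply/eqP; congr Posz.
suff : (i - tm n t a - 1) %% r n t (2 * a).+1 = x - nm n t a.+1 - 1 by lia.
rewrite -(modn_small (_ : x - nm n t a.+1 - 1 < r n t (2 * a).+1)); last first.
  by have := n_nm_rprev n t a.+1; rewrite mulnS rprevS; lia.
by apply/eqP; rewrite -(eqn_modDr 1) !subnK //; lia.
Qed.

End GMembership.

Lemma g_memP n t i x : 0 < i <= t -> 0 < x <= n -> g_mem n t i x <-> g_rel n t i x.
Proof. by move=> /andP [? ?] /andP [? ?]; split; [apply: g_mem_rel | apply: g_rel_mem]. Qed.

Lemma g_mem_low n t i x : 0 < i <= t -> 0 < x <= n %/ t * t ->
  g_mem n t i x = (x == i %[mod t]).
Proof.
move=> i_range x_range; have x_le : x <= n by have := leq_trunc_div n t; lia.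
rewrite -nm1 in x_range; apply/idP/idP.
- by move/(g_memP i_range _)/(g_rel_low x_range); apply; lia.
- by move/(g_rel_low x_range _)/(g_memP i_range _); apply; lia.
Qed.

Lemma g_mem_high n t i x : 0 < i <= t -> n %/ t * t < x <= n ->
  g_mem n t i x = g_mem t (n %% t) (x - n %/ t * t) i.
Proof.
move=> i_range x_range; have := divn_eq n t.
have x_gt : nm n t 1 < x by rewrite nm1; case/andP: x_range.
move: x_range; rewrite -(nm1 n t) => x_range nE.
have x_range' : 0 < x - nm n t 1 <= n %% t by lia.
have x_range'' : 0 < x <= n by lia.
apply/idP/idP.
- by move/(g_memP i_range x_range'')/(g_rel_shift _ x_gt)/(g_memP x_range' i_range).
- by move/(g_memP x_range' i_range)/(g_rel_shift _ x_gt)/(g_memP i_range x_range'').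
Qed.

Lemma eqn_mod_small m i t : 0 < m <= t -> 0 < i <= t -> (m == i %[mod t]) = (m == i).
Proof.
move=> m_range i_range.
have -> : m = (m - 1) + 1 by lia.
have -> : i = (i - 1) + 1 by lia.
by rewrite eqn_modDr !modn_small ?eqn_add2r; lia.
Qed.

(* Over GF(2), the 0/1 matrix [M i x] (rows i in Y, columns x in X) has independent
   rows ([rows_indep]) and independent columns ([cols_indep]). *)
Definition rows_indep (M : nat -> nat -> bool) (Y X : seq nat) :=
  forall S : pred nat, has S Y ->
    has (fun x => odd (count (fun i => S i && M i x) Y)) X.

Definition cols_indep (M : nat -> nat -> bool) (Y X : seq nat) :=
  forall T : pred nat, has T X ->
    has (fun i => odd (count (fun x => T x && M i x) X)) Y.

Definition nondeg M Y X := rows_indep M Y X /\ cols_indep M Y X.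

Lemma nondeg_tr M Y X : nondeg M Y X -> nondeg (fun x i => M i x) X Y.
Proof. by case. Qed.

Lemma nondeg_perm M Y X Y' X' : perm_eq Y Y' -> perm_eq X X' ->
  nondeg M Y X -> nondeg M Y' X'.
Proof.
move=> pY pX [rows cols]; split.
- move=> S; rewrite -(perm_has _ pY) -(perm_has _ pX) => /rows.
  by apply: sub_has => x; rewrite (permP pY).
- move=> T; rewrite -(perm_has _ pY) -(perm_has _ pX) => /cols.
  by apply: sub_has => x; rewrite (permP pX).
Qed.

Lemma nondeg_map M M' f h Y X :
  (forall i x, i \in Y -> x \in X -> M (f i) (h x) = M' i x) ->
  nondeg M' Y X -> nondeg M (map f Y) (map h X).
Proof.
move=> ME [rows cols]; split.
- move=> S; rewrite has_map => /rows /hasP [x xX odd_x]; apply/hasP.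
  exists (h x); first exact: map_f.
  by rewrite count_map -(eq_in_count (a1 := fun i => S (f i) && M' i x)) // => i iY /=; rewrite ME.
- move=> T; rewrite has_map => /cols /hasP [i iY odd_i]; apply/hasP.
  exists (f i); first exact: map_f.
  by rewrite count_map -(eq_in_count (a1 := fun x => T (h x) && M' i x)) // => x xX /=; rewrite ME.
Qed.

Lemma nondeg_cat M Y1 Y2 X1 X2 :
  (forall i x, i \in Y1 -> x \in X2 -> M i x = false) ->
  nondeg M Y1 X1 -> nondeg M Y2 X2 -> nondeg M (Y1 ++ Y2) (X1 ++ X2).
Proof.
move=> M0 [rows1 cols1] [rows2 cols2]; split.
- move=> S; rewrite !has_cat; have [S2|S2] := boolP (has S Y2).
    have /hasP [x xX odd_x] := rows2 _ S2.
    move=> _; apply/orP; right; apply/hasP; exists x => //; rewrite count_cat.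
    by rewrite (eq_in_count (a2 := pred0)) ?count_pred0 // => i iY; rewrite M0 ?andbF.
  rewrite orbF => /rows1 /hasP [x xX odd_x].
  apply/orP; left; apply/hasP; exists x => //; rewrite count_cat addnC.
  rewrite (eq_in_count (s := Y2) (a2 := pred0)) ?count_pred0 // => i iY.
  by move/hasPn: S2 => /(_ i iY) /negbTE ->.
- move=> T; rewrite !has_cat; have [T1|T1] := boolP (has T X1).
    have /hasP [i iY odd_i] := cols1 _ T1.
    move=> _; apply/orP; left; apply/hasP; exists i => //; rewrite count_cat addnC.
    by rewrite (eq_in_count (s := X2) (a2 := pred0)) ?count_pred0 // => x xX; rewrite M0 ?andbF.
  move=> /= /cols2 /hasP [i iY odd_i].
  apply/orP; right; apply/hasP; exists i => //; rewrite count_cat.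
  rewrite (eq_in_count (s := X1) (a2 := pred0)) ?count_pred0 // => x xX.
  by move/hasPn: T1 => /(_ x xX) /negbTE ->.
Qed.

Lemma nondeg_bij M (rho : nat -> nat) Y X :
  uniq Y -> uniq X -> {in X &, injective rho} ->
  (forall x, x \in X -> rho x \in Y) ->
  (forall i, i \in Y -> exists2 x, x \in X & rho x = i) ->
  (forall i x, i \in Y -> x \in X -> M i x = (i == rho x)) -> nondeg M Y X.
Proof.
move=> uY uX inj into onto ME; split.
- move=> S /hasP [i0 i0Y Si0]; have [x0 x0X rho_x0] := onto _ i0Y.
  apply/hasP; exists x0 => //.
  rewrite (eq_in_count (a2 := pred1 i0)) ?count_uniq_mem ?i0Y // => i iY /=.
  by rewrite ME // rho_x0; case: eqP => [->|]; rewrite ?Si0 ?andbF.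
- move=> T /hasP [x0 x0X Tx0]; apply/hasP; exists (rho x0); first exact: into.
  rewrite (eq_in_count (a2 := pred1 x0)) ?count_uniq_mem ?x0X // => x xX /=.
  rewrite ME ?into //; have [->|ne] := eqVneq x x0; first by rewrite eqxx Tx0.
  by rewrite andbC; case: eqP => // /esym/(inj _ _ xX x0X) eq_x; rewrite eq_x eqxx in ne.
Qed.

(* For s < n: the positions s+1, ..., s+t of [1, n], read cyclically. *)
Definition wseq n t s :=
  if s + t <= n then iota s.+1 t else iota s.+1 (n - s) ++ iota 1 (s + t - n).

Lemma not_has_mem (s1 s2 : seq nat) : (forall x, x \in s2 -> x \in s1 -> False) ->
  ~~ has (mem s1) s2.
Proof. by move=> s12; apply/hasPn => x /s12 x_nin; apply/negP => /x_nin. Qed.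

Ltac solve_uniq :=
  rewrite ?cat_uniq ?iota_uniq ?andbT ?andTb;
  repeat (apply/andP; split);
  rewrite ?cat_uniq ?iota_uniq ?andbT ?andTb //;
  try (apply: not_has_mem => x; rewrite ?mem_cat ?mem_iota; lia).

Ltac solve_perm :=
  apply: uniq_perm; [solve_uniq | solve_uniq |
    move=> x; rewrite ?mem_cat ?mem_iota; lia].

(* An abstract relation shaped like [g_mem n t] with N = (n %/ t) * t and r = n %% t:
   periodic of period t on [1, N], and on the top part (N, n] given by the transpose
   of the relation for (t, r), whose nondegeneracy is assumed in [top_windows] and
   [top_tails]. *)
Section WindowStep.
Variables (M : nat -> nat -> bool) (n t N r : nat).
Hypotheses (t_gt0 : 0 < t) (r_lt : r < t) (t_le_N : t <= N) (nE : n = N + r).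
Hypothesis t_dvd_N : t %| N.
Hypothesis M_low : forall i x, 0 < i <= t -> 0 < x <= N -> M i x = (x == i %[mod t]).
Hypothesis M_top : forall i x, 0 < i <= r -> N < x <= n -> M i x = (i == x - N).
Hypothesis top_windows : forall b, b + r <= t -> nondeg M (iota b.+1 r) (iota N.+1 r).
Hypothesis top_tails : forall m, m <= r -> nondeg M (iota (t - m).+1 m) (iota (n - m).+1 m).

Lemma M_block u i x : 0 < i <= t -> u * t < x <= u * t + t -> x <= N ->
  M i x = (i == x - u * t).
Proof.
move=> i_range x_range x_le; rewrite M_low //; last by lia.
have {1}-> : x = u * t + (x - u * t) by lia.
by rewrite modnMDl eqn_mod_small 1?eq_sym; lia.
Qed.

Lemma M_first i x : 0 < i <= t -> 0 < x <= t -> M i x = (i == x).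
Proof. by move=> i_range x_range; rewrite (@M_block 0) ?mul0n ?subn0; lia. Qed.

Lemma M_last i x : 0 < i <= t -> N - t < x <= N -> M i x = (i == x - (N - t)).
Proof.
move=> i_range x_range; have NE : N = (N %/ t).-1 * t + t.
  by rewrite -mulSnr prednK ?divnK // divn_gt0.
by rewrite {1}NE addnK (@M_block (N %/ t).-1) //; lia.
Qed.

Lemma nondeg_window_low s : s + t <= N -> nondeg M (iota 1 t) (iota s.+1 t).
Proof.
move=> s_le; set U := s %/ t * t.
have U_range : U <= s < U + t by have := divn_eq s t; have := ltn_pmod s t_gt0; lia.
pose rho x := if x <= U + t then x - U else x - (U + t).
apply: (@nondeg_bij M rho); rewrite ?iota_uniq //.
- by move=> x y; rewrite !mem_iota /rho => x_in y_in; case: ifP; case: ifP; lia.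
- by move=> x; rewrite !mem_iota /rho; case: ifP; lia.
- move=> i; rewrite mem_iota => i_in.
  have [lt_s|le_s] := ltnP s (U + i).
    by exists (U + i); rewrite ?mem_iota /rho ?ifT; lia.
  by exists (U + t + i); rewrite ?mem_iota /rho ?ifF; lia.
- move=> i x; rewrite !mem_iota /rho => i_in x_in; case: ifP => x_le.
    by apply: M_block; lia.
  by rewrite -mulSnr; apply: M_block; rewrite ?mulSnr; lia.
Qed.

Lemma nondeg_window_mid s : s < N < s + t -> s + t <= n ->
  nondeg M (iota 1 t) (iota s.+1 t).
Proof.
move=> s_range s_le; set m := s + t - N.
suff : nondeg M (iota 1 m ++ iota m.+1 (t - m)) (iota N.+1 m ++ iota s.+1 (N - s)).
  by apply: nondeg_perm; solve_perm.
apply: nondeg_cat.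
- by move=> i x; rewrite !mem_iota => i_in x_in; rewrite M_last; [apply/eqP | |]; lia.
- apply: (@nondeg_bij M (subn^~ N)); rewrite ?iota_uniq //.
  + by move=> x y; rewrite !mem_iota; lia.
  + by move=> x; rewrite !mem_iota; lia.
  + by move=> i; rewrite mem_iota => i_in; exists (N + i); rewrite ?mem_iota; lia.
  + by move=> i x; rewrite !mem_iota => i_in x_in; rewrite M_top; lia.
- apply: (@nondeg_bij M (subn^~ (N - t))); rewrite ?iota_uniq //.
  + by move=> x y; rewrite !mem_iota; lia.
  + by move=> x; rewrite !mem_iota; lia.
  + by move=> i; rewrite mem_iota => i_in; exists (N - t + i); rewrite ?mem_iota; lia.
  + by move=> i x; rewrite !mem_iota => i_in x_in; rewrite M_last; lia.
Qed.

Lemma nondeg_window_wrap_low s : s < N -> n < s + t ->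
  nondeg M (iota 1 t) (iota s.+1 (n - s) ++ iota 1 (s + t - n)).
Proof.
move=> s_lt lt_st; set b := s + t - n.
pose rho x := if x <= b then x else x - (N - t).
have MX i x : 0 < i <= t -> x \in iota s.+1 (N - s) ++ iota 1 b -> M i x = (i == rho x).
  move=> i_range; rewrite mem_cat !mem_iota /rho => x_in.
  by case: ifP => x_le; [rewrite M_first | rewrite M_last]; lia.
suff : nondeg M (iota b.+1 r ++ (iota (b + r).+1 (N - s) ++ iota 1 b))
                (iota N.+1 r ++ (iota s.+1 (N - s) ++ iota 1 b)).
  by apply: nondeg_perm; solve_perm.
apply: nondeg_cat; last apply: (@nondeg_bij M rho); try by solve_uniq.
- move=> i x i_in x_in; rewrite MX //; last by move: i_in; rewrite mem_iota; lia.
  by move: i_in x_in; rewrite mem_cat !mem_iota /rho; case: ifP => _ *; apply/eqP; lia.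
- by apply: top_windows; lia.
- by move=> x y; rewrite !mem_cat !mem_iota /rho => x_in y_in; case: ifP; case: ifP; lia.
- by move=> x; rewrite !mem_cat !mem_iota /rho; case: ifP; lia.
- move=> i; rewrite mem_cat !mem_iota => i_in.
  have [i_le|lt_i] := leqP i b; first by exists i; rewrite ?mem_cat ?mem_iota /rho ?ifT; lia.
  by exists (N - t + i); rewrite ?mem_cat ?mem_iota /rho ?ifF; lia.
- by move=> i x i_in x_in; apply: MX => //; move: i_in; rewrite mem_cat !mem_iota; lia.
Qed.

Lemma nondeg_window_wrap_high s : N <= s < n ->
  nondeg M (iota 1 t) (iota s.+1 (n - s) ++ iota 1 (s + t - n)).
Proof.
move=> s_range; set m := n - s.
suff : nondeg M (iota (t - m).+1 m ++ iota 1 (t - m)) (iota s.+1 m ++ iota 1 (t - m)).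
  by apply: nondeg_perm; solve_perm.
apply: nondeg_cat.
- by move=> i x; rewrite !mem_iota => i_in x_in; rewrite M_first; [apply/eqP | |]; lia.
- by rewrite (_ : s = n - m); [apply: top_tails | ]; lia.
- apply: (@nondeg_bij M id); rewrite ?iota_uniq //; first by move=> i i_in; exists i.
  by move=> i x; rewrite !mem_iota => i_in x_in; rewrite M_first; lia.
Qed.

Lemma nondeg_tails m : m <= t -> nondeg M (iota (t - m).+1 m) (iota (n - m).+1 m).
Proof.
move=> m_le; have [m_le_r|lt_r] := leqP m r; first exact: top_tails.
suff : nondeg M (iota (t - m).+1 r ++ iota (t - m + r).+1 (m - r))
                (iota N.+1 r ++ iota (n - m).+1 (m - r)).
  by apply: nondeg_perm; solve_perm.
apply: nondeg_cat.
- by move=> i x; rewrite !mem_iota => i_in x_in; rewrite M_last; [apply/eqP | |]; lia.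
- by apply: top_windows; lia.
- apply: (@nondeg_bij M (subn^~ (N - t))); rewrite ?iota_uniq //.
  + by move=> x y; rewrite !mem_iota; lia.
  + by move=> x; rewrite !mem_iota; lia.
  + by move=> i; rewrite mem_iota => i_in; exists (N - t + i); rewrite ?mem_iota; lia.
  + by move=> i x; rewrite !mem_iota => i_in x_in; rewrite M_last; lia.
Qed.

Lemma nondeg_windows s : s < n -> nondeg M (iota 1 t) (wseq n t s).
Proof.
move=> s_lt; rewrite /wseq; case: ifP => st_le.
  have [st_le_N|lt_N] := leqP (s + t) N; first exact: nondeg_window_low.
  by apply: nondeg_window_mid; lia.
have [s_lt_N|N_le] := ltnP s N; first by apply: nondeg_window_wrap_low; lia.
by apply: nondeg_window_wrap_high; lia.
Qed.

End WindowStep.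

Lemma nondeg_g_top n t Y Y' : 0 < t <= n ->
  (forall i, i \in Y -> 0 < i <= t) -> (forall y, y \in Y' -> 0 < y <= n %% t) ->
  nondeg (g_mem t (n %% t)) Y' Y -> nondeg (g_mem n t) Y (map (addn (n %/ t * t)) Y').
Proof.
move=> t_range Y_range Y'_range nd; rewrite -(map_id Y); apply: nondeg_map (nondeg_tr nd).
move=> i y i_in y_in; rewrite g_mem_high ?addKn ?Y_range //.
by have := Y'_range _ y_in; have := divn_eq n t; lia.
Qed.

Lemma nondeg_g n t : 0 < t <= n ->
  (forall s, s < n -> nondeg (g_mem n t) (iota 1 t) (wseq n t s)) /\
  (forall m, m <= t -> nondeg (g_mem n t) (iota (t - m).+1 m) (iota (n - m).+1 m)).
Proof.
elim/ltn_ind: t n => t IH n /andP [t_gt0 t_le].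
have nE : n = n %/ t * t + n %% t := divn_eq n t.
have r_lt : n %% t < t := ltn_pmod n t_gt0.
have t_le_N : t <= n %/ t * t by rewrite leq_pmull // divn_gt0.
have M_top i x : 0 < i <= n %% t -> n %/ t * t < x <= n ->
    g_mem n t i x = (i == x - n %/ t * t).
  move=> i_range x_range; rewrite g_mem_high; [|lia|lia].
  have r_le : n %% t <= t %/ (n %% t) * (n %% t) by rewrite leq_pmull // divn_gt0; lia.
  by rewrite g_mem_low ?eqn_mod_small 1?eq_sym; lia.
have [top_windows top_tails] :
    (forall b, b + n %% t <= t ->
       nondeg (g_mem n t) (iota b.+1 (n %% t)) (iota (n %/ t * t).+1 (n %% t))) /\
    (forall m, m <= n %% t ->
       nondeg (g_mem n t) (iota (t - m).+1 m) (iota (n - m).+1 m)).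
  have [r0|r_gt0] := posnP (n %% t).
    by split=> [b|m]; rewrite ?r0 ?leqn0 => // [/eqP ->]; split.
  have [IW IP] := IH _ r_lt t ltac:(lia).
  split=> [b b_le|m m_le].
  - have := IW b ltac:(lia); rewrite /wseq ifT // => nd.
    rewrite -[(n %/ t * t).+1]addn1 iotaDl; apply: nondeg_g_top nd; try lia.
    + by move=> i; rewrite mem_iota; lia.
    + by move=> i; rewrite mem_iota; lia.
  - rewrite (_ : (n - m).+1 = n %/ t * t + (n %% t - m).+1); last by lia.
    rewrite iotaDl; apply: nondeg_g_top (IP m m_le); try lia.
    + by move=> i; rewrite mem_iota; lia.
    + by move=> i; rewrite mem_iota; lia.
have t_dvd : t %| n %/ t * t by apply: dvdn_mull.
have M_low i x : 0 < i <= t -> 0 < x <= n %/ t * t -> g_mem n t i x = (x == i %[mod t]).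
  exact: g_mem_low.
split; [apply: (@nondeg_windows _ n t (n %/ t * t) (n %% t)) |
        apply: (@nondeg_tails _ n t (n %/ t * t) (n %% t))] => //.
Qed.

Lemma odd_card_symdiff (T : finType) (A B : {set T}) :
  odd #|symdiff A B| = odd #|A| (+) odd #|B|.
Proof.
rewrite /symdiff cardsU (_ : (A :\: B) :&: (B :\: A) = set0); last first.
  by apply/setP => x; rewrite !inE; case: (x \in A); case: (x \in B).
rewrite cards0 subn0 -(cardsID B A) -(cardsID A B) setIC !oddD.
by case: (odd _); case: (odd _); case: (odd _).
Qed.

Section Combinations.
Variables n t : nat.

Definition gsum (S : {set 'I_t}) : {set 'I_n} :=
  [set x : 'I_n | odd #|[set j in S | x \in g n t (val j).+1]|].

Lemma gsum_symdiff S1 S2 : symdiff (gsum S1) (gsum S2) = gsum (symdiff S1 S2).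
Proof.
apply/setP => x; rewrite !inE; set P := fun j : 'I_t => x \in g n t (val j).+1.
rewrite (_ : [set j in (S1 :\: S2) :|: (S2 :\: S1) | P j] =
    symdiff [set j in S1 | P j] [set j in S2 | P j]) ?odd_card_symdiff.
  by case: (odd #|[set j in S1 | P j]|); case: (odd #|[set j in S2 | P j]|).
by apply/setP => j; rewrite /symdiff !inE; case: (j \in S1); case: (j \in S2); case: (P j).
Qed.

Lemma gsum0 : gsum set0 = set0.
Proof.
apply/setP => x; rewrite !inE (_ : [set j in set0 | _] = set0) ?cards0 //.
by apply/setP => j; rewrite !inE.
Qed.

Lemma gsum1 i : gsum [set i] = g n t (val i).+1.
Proof.
apply/setP => x; rewrite in_set; have [x_in|x_nin] := boolP (x \in g n t (val i).+1).
  rewrite (_ : [set j in [set i] | _] = [set i]) ?cards1 //.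
  by apply/setP => j; rewrite in_set !in_set1; case: eqP => // ->; rewrite x_in.
rewrite (_ : [set j in [set i] | _] = set0) ?cards0 //.
by apply/setP => j; rewrite in_set in_set1 in_set0; case: eqP => // ->; rewrite (negbTE x_nin).
Qed.

Definition gspan := [set gsum S | S in [set: {set 'I_t}]].

Lemma gspan_subgroup : is_subgroup gspan.
Proof.
apply/andP; split; first by apply/imsetP; exists set0; rewrite ?inE ?gsum0.
apply/forall_inP => _ /imsetP [S1 _ ->]; apply/forall_inP => _ /imsetP [S2 _ ->].
by rewrite gsum_symdiff; apply/imsetP; exists (symdiff S1 S2); rewrite ?inE.
Qed.

Lemma gsum_mem (H : {set {set 'I_n}}) : is_subgroup H ->
  [set g n t (val i).+1 | i : 'I_t] \subset H -> forall S, gsum S \in H.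
Proof.
case/andP=> H0 /forall_inP Hsymdiff gH S.
elim: {S}#|S| {-2}S (erefl #|S|) => [|m IH] S cardS.
  by move/eqP: cardS; rewrite cards_eq0 => /eqP ->; rewrite gsum0.
have [i iS] : exists i, i \in S by apply/set0Pn; rewrite -card_gt0 cardS.
have -> : S = symdiff [set i] (S :\ i).
  apply/setP => j; rewrite /symdiff !inE.
  by case: (eqVneq j i) => [->|] /=; rewrite ?iS //; case: (j \in S).
have gi : g n t (val i).+1 \in H by apply: (subsetP gH); apply/imsetP; exists i.
rewrite -gsum_symdiff gsum1; move/forall_inP: (Hsymdiff _ gi); apply.
by apply: IH; rewrite (cardsD1 i S) iS in cardS; lia.
Qed.

Lemma G_gspan : G n t = gspan.
Proof.
apply/eqP; rewrite eqEsubset; apply/andP; split.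
  apply: bigcap_inf; rewrite gspan_subgroup /=.
  by apply/subsetP => _ /imsetP [i _ ->]; rewrite -gsum1; apply/imsetP; exists [set i].
by apply/subsetP => _ /imsetP [S _ ->]; apply/bigcapP => H /andP [sH gH]; apply: gsum_mem.
Qed.

End Combinations.

Lemma wseq_range n t s y : s < n -> t <= n -> y \in wseq n t s -> 0 < y <= n.
Proof. by move=> s_lt t_le; rewrite /wseq; case: ifP; rewrite ?mem_cat !mem_iota; lia. Qed.

Lemma mem_wseq n t s x : s < n -> t <= n -> x < n ->
  (x.+1 \in wseq n t s) = [exists j : 'I_t, x == (s + j) %% n].
Proof.
move=> s_lt t_le x_lt; apply/idP/existsP.
- rewrite /wseq; case: ifP => st_le; rewrite ?mem_cat !mem_iota => x_in.
    have j_lt : x - s < t by lia.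
    by exists (Ordinal j_lt) => /=; rewrite modn_small; lia.
  have [s_le|lt_s] := leqP s x.
    have j_lt : x - s < t by lia.
    by exists (Ordinal j_lt) => /=; rewrite modn_small; lia.
  have j_lt : x + n - s < t by lia.
  exists (Ordinal j_lt) => /=.
  by rewrite (_ : s + (x + n - s) = x + n) ?modnDr ?modn_small; lia.
- case=> j /eqP ->; have j_lt := ltn_ord j; rewrite /wseq.
  have [sj_lt|n_le] := ltnP (s + j) n.
    by rewrite modn_small //; case: ifP; rewrite ?mem_cat !mem_iota; lia.
  rewrite (_ : s + j = (s + j - n) + n) ?modnDr ?modn_small; try lia.
  by case: ifP; rewrite ?mem_cat !mem_iota; lia.
Qed.

Lemma window_wseq n t (s : int) (x : 'I_n) : t <= n ->
  (x \in window n t s) = (x.+1 \in wseq n t `|(s %% Posz n)%Z|%N).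
Proof.
move=> t_le; have n_gt0 : 0 < n by case: x => x; lia.
have s_ge0 : (0 <= (s %% Posz n)%Z)%R by apply: modz_ge0; rewrite eqz_nat -lt0n.
have s_lt : `|(s %% Posz n)%Z|%N < n by rewrite -ltz_nat gez0_abs // ltz_pmod.
rewrite mem_wseq ?ltn_ord // /window inE; apply: eq_existsb => j.
rewrite /lpr (_ : (s + Posz (val j).+1 - 1) = s + Posz (val j))%R; last by lia.
rewrite -modzDml -[((s %% Posz n)%Z)]gez0_abs // -PoszD modz_nat absz_nat.
by set K := ((_ + _) %% n)%N; lia.
Qed.

Lemma count_iota_card n t (S : {set 'I_t}) (x : 'I_n) :
  count (fun i => [exists j in S, i == (val j).+1] && g_mem n t i x.+1) (iota 1 t)
  = #|[set j in S | x \in g n t (val j).+1]|.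
Proof.
rewrite -[1]/(1 + 0) iotaDl -val_enum_ord -map_comp count_map.
rewrite cardE /enum_mem size_filter -enumT count_filter; apply: eq_count => j /=.
rewrite !inE add1n andbT; congr (_ && _).
apply/existsP/idP => [[j' /andP [j'S /eqP [/val_inj ->]]] // | jS].
by exists j; rewrite jS eqxx.
Qed.

Lemma gsum_meets_wseq n t (S : {set 'I_t}) s : 0 < t <= n -> S != set0 -> s < n ->
  exists2 x : 'I_n, x \in gsum n S & x.+1 \in wseq n t s.
Proof.
move=> t_range S_neq0 s_lt; have [rows _] := (nondeg_g t_range).1 s s_lt.
have [j0 j0S] := set0Pn _ S_neq0.
have S_hit : has (fun i => [exists j in S, i == (val j).+1]) (iota 1 t).
  apply/hasP; exists j0.+1; first by rewrite mem_iota; have := ltn_ord j0; lia.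
  by apply/existsP; exists j0; rewrite j0S eqxx.
have /hasP [y y_in odd_y] := rows _ S_hit.
have y_range : 0 < y <= n by apply: (wseq_range s_lt _ y_in); case/andP: t_range.
have y_lt : y.-1 < n by lia.
exists (Ordinal y_lt); last by rewrite /= prednK //; lia.
by rewrite inE -count_iota_card /= prednK //; lia.
Qed.

Lemma gsum_inj n t : 0 < t <= n -> injective (@gsum n t).
Proof.
move=> t_range S1 S2 eq_sum; apply/eqP; apply: contraT => ne.
have ne' : symdiff S1 S2 != set0.
  apply: contra ne => /eqP /setP eq0; apply/eqP/setP => j.
  by move: (eq0 j); rewrite /symdiff !inE; case: (j \in S1); case: (j \in S2).
have n_gt0 : 0 < n by case/andP: t_range; lia.
have [x] := gsum_meets_wseq t_range ne' n_gt0.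
by rewrite -gsum_symdiff eq_sum /symdiff setDv setU0 inE.
Qed.

Theorem lemma3 (n t : nat) (ht : 0 < t) (htn : t <= n) :
  #|G n t| = 2 ^ t /\
  (forall A, A \in G n t -> A != set0 ->
     forall s : int, A :&: window n t s != set0).
Proof.
have t_range : 0 < t <= n by rewrite ht htn.
rewrite G_gspan /gspan; split.
  rewrite card_imset; last by move=> S1 S2; apply: gsum_inj.
  by rewrite -powersetT card_powerset cardsT card_ord.
move=> _ /imsetP [S _ ->] sum_neq0 s.
have S_neq0 : S != set0 by apply: contraNneq sum_neq0 => ->; rewrite gsum0.
have s_lt : `|(s %% Posz n)%Z|%N < n.
  by rewrite -ltz_nat gez0_abs ?modz_ge0 ?ltz_pmod //; lia.
have [x x_in x_win] := gsum_meets_wseq t_range S_neq0 s_lt.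
by apply/set0Pn; exists x; rewrite inE x_in window_wseq.
Qed.
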